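(* For every $i\in\{0,\ldots,k-n\}$, the interior of $C_i$ in $\mathcal{F}_{n+1,2d}$ is $$\mathrm{int}(C_i)=\{f\in\mathcal{F}_{n+1,2d} : \exists A\in\mathcal{G}^{-1}(f)\text{ such that } q_A(z)>0\text{ for all }[z]\in V_i(\mathbb{R})\}.$$
   Context: Let $n,d\geq 1$ be integers. $\mathcal{F}_{n+1,l}$ denotes the real vector space of real forms of degree $l$ in $X=(X_0,\ldots,X_n)$, with its Euclidean topology. Let $k:=\binom{n+d}{n}-1$. Order $I_{n+1,d}:=\{\alpha\in\mathbb{N}_0^{n+1}: |\alpha|=d\}$ lexicographically in decreasing order as $\alpha_0,\ldots,\alpha_k$ (so $\alpha_0=(d,0,\ldots,0)$, $\alpha_k=(0,\ldots,0,d)$), and set $m_j(X):=X^{\alpha_j}$. For $A\in\mathrm{Sym}_{k+1}(\mathbb{R})$ let $q_A(Z):=ZAZ^t$, $Z=(Z_0,\ldots,Z_k)$, and let $\mathcal{G}:\mathrm{Sym}_{k+1}(\mathbb{R})\to\mathcal{F}_{n+1,2d}$, $\mathcal{G}(A):=q_A(m_0(X),\ldots,m_k(X))$. For $i\in\{0,\ldots,k-n\}$ let $H_i:=\{[z]\in\mathbb{P}^k(\mathbb{C}) : \exists x\in\mathbb{C}^{n+1},\ (z_0,\ldots,z_{n+i})=(m_0(x),\ldots,m_{n+i}(x))\}$, $V_i$ its Zariski closure in $\mathbb{P}^k$, $V_i(\mathbb{R})$ its real points, and $C_i:=\{f\in\mathcal{F}_{n+1,2d} : \exists A\in\mathcal{G}^{-1}(f),\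 q_A(z)\geq 0\ \forall [z]\in V_i(\mathbb{R})\}$. (For a quadratic form the conditions $q_A(z)\geq 0$, $q_A(z)>0$ do not depend on the chosen representative $z$ of $[z]$.) *)

From HB Require Import structures.
From mathcomp Require Import all_boot all_order all_algebra.
From mathcomp Require Import reals.
From mathcomp Require Import complex.
From mathcomp Require Import mpoly.

Set Implicit Arguments.
Unset Strict Implicit.
Unset Printing Implicit Defensive.

Import Order.TTheory GRing.Theory Num.Theory.
Local Open Scope ring_scope.

Definition kk (n d : nat) : nat := ('C(n + d, n)).-1.

(* I_{n+1,d}: exponent vectors of degree d in n+1 variables, listed in
   decreasing lexicographic order (X_0 most significant).  On monomials of
   equal degree the canonical order of multinomials' 'X_{1..n} is the
   lexicographic order of the exponent tuples. *)
Definition mons (n d : nat) : seq 'X_{1..n.+1} :=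
  sort (fun m1 m2 : 'X_{1..n.+1} => (m2 <= m1)%O)
       [seq m <- [seq val m | m : 'X_{1..n.+1 < d.+1}] | mdeg m == d].

Definition alpha (n d : nat) (j : 'I_((kk n d).+1)) : 'X_{1..n.+1} :=
  nth 0%MM (mons n d) j.

Definition mono (R : comNzRingType) (n d : nat) (j : 'I_((kk n d).+1))
  : {mpoly R[n.+1]} := 'X_[alpha j].

Definition is_form (R : realType) (n l : nat) (f : {mpoly R[n.+1]}) : Prop :=
  f \is l.-homog.

Definition is_symmx (R : realType) (m : nat) (A : 'M[R]_m) : Prop := A^T = A.

Definition qA (R : comNzRingType) (m : nat) (A : 'M[R]_m) (z : 'I_m -> R) : R :=
  \sum_(a < m) \sum_(b < m) z a * A a b * z b.

Definition Gmap (R : realType) (n d : nat) (A : 'M[R]_((kk n d).+1))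
  : {mpoly R[n.+1]} :=
  \sum_(a < (kk n d).+1) \sum_(b < (kk n d).+1)
     A a b *: (mono R a * mono R b).

(* H_i, as a set of representatives z in C^{k+1} \ {0} of points [z] *)
Definition Hset (R : realType) (n d i : nat) (z : 'I_((kk n d).+1) -> complex R)
  : Prop :=
  (exists j, z j != 0) /\
  exists x : 'I_n.+1 -> complex R,
    forall j : 'I_((kk n d).+1), (j <= n + i)%N -> z j = (mono (complex R) j).@[x].

(* Zariski closure in P^k(C) of a set S of points given by representatives:
   the common zeros of all homogeneous polynomials vanishing on S. *)
Definition zariski_closure (C : comNzRingType) (m : nat)
  (S : ('I_m.+1 -> C) -> Prop) (z : 'I_m.+1 -> C) : Prop :=
  (exists j, z j != 0) /\
  forall (e : nat) (p : {mpoly C[m.+1]}), p \is e.-homog ->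
    (forall w, S w -> p.@[w] = 0) -> p.@[z] = 0.

Definition Vset (R : realType) (n d i : nat) : ('I_((kk n d).+1) -> complex R) -> Prop :=
  zariski_closure (@Hset R n d i).

(* V_i(R): real points, given by real representatives *)
Definition VRset (R : realType) (n d i : nat) (z : 'I_((kk n d).+1) -> R) : Prop :=
  @Vset R n d i (fun j => (z j)%:C%C).

Definition Cset (R : realType) (n d i : nat) (f : {mpoly R[n.+1]}) : Prop :=
  is_form (2 * d) f /\
  exists A : 'M[R]_((kk n d).+1),
    is_symmx A /\ Gmap A = f /\ forall z, @VRset R n d i z -> 0 <= qA A z.

(* interior of a subset S of F_{n+1,l} for the Euclidean topology of
   F_{n+1,l}, i.e. of its coefficient vector (sup-norm balls). *)
Definition form_interior (R : realType) (n l : nat)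
  (S : {mpoly R[n.+1]} -> Prop) (f : {mpoly R[n.+1]}) : Prop :=
  is_form l f /\
  exists eps : R, 0 < eps /\
    forall g : {mpoly R[n.+1]}, is_form l g ->
      (forall m : 'X_{1..n.+1}, `|g@_m - f@_m| < eps) -> S g.

From HB Require Import structures.
From mathcomp Require Import all_boot all_order all_algebra.
From mathcomp Require Import reals complex mpoly.
From mathcomp Require Import boolp classical_sets topology normedtype derive.
From mathcomp Require Import ring.

Set Implicit Arguments.
Unset Strict Implicit.
Unset Printing Implicit Defensive.
Import Order.TTheory GRing.Theory Num.Theory.
Import numFieldNormedType.Exports.
Local Open Scope ring_scope.

(* Write N := k + 1.  If f = G(A) with q_A > 0 on V_i(R), then compactness of
   the real points of V_i on the unit sphere and homogeneity give
   q_A(z) >= c |z|^2 on V_i(R) for some c > 0.  Every form h of degree 2d is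
   G(B) for a symmetric B with |B_ab| <= max_m |h_m|, so |q_B(z)| <=
   N^2 max_m |h_m| |z|^2 and f + h stays in C_i when h is small.  Conversely,
   if f is interior then f - t G(1) = G(A') lies in C_i for a small t > 0,
   and f = G(A' + t 1) with q_{A' + t 1}(z) >= t |z|^2 > 0 on V_i(R). *)

Section RealContinuity.
Variable R : realType.

Lemma continuous_meval N (p : {mpoly R[N]}) :
  continuous (fun v : 'rV[R]_N => p.@[fun j => v ord0 j]).
Proof.
have -> : (fun v : 'rV[R]_N => p.@[fun j => v ord0 j]) =
    fun v => \sum_(m <- msupp p) p@_m * \prod_i \prod_(k < m i) v ord0 i.
  apply: funext => v; rewrite mevalE; apply: eq_bigr => m _; congr (_ * _).
  apply: eq_bigr => j _.
  by rewrite -(big_mkord xpredT (fun=> v ord0 j)) prodr_const_nat subn0.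
apply: continuous_big; first exact: add_continuous.
move=> m _ v; apply: continuousM; first exact: cst_continuous.
apply: continuous_big (v); first exact: mul_continuous.
move=> j _; apply: continuous_big; first exact: mul_continuous.
by move=> k _; exact: coord_continuous.
Qed.

Lemma qA_meval N (A : 'M[R]_N) z :
  qA A z = (\sum_a \sum_b A a b *: ('X_a * 'X_b) : {mpoly R[N]}).@[z].
Proof.
rewrite /qA (big_morph _ (mevalD _) (meval0 _)); apply: eq_bigr => a _.
rewrite (big_morph _ (mevalD _) (meval0 _)); apply: eq_bigr => b _.
by rewrite mevalZ mevalM !mevalXU mulrCA mulrA.
Qed.

Lemma continuous_qA N (A : 'M[R]_N) :
  continuous (fun v : 'rV[R]_N => qA A (fun j => v ord0 j)).
Proof.
under [fun v => _]funext do rewrite qA_meval.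
exact: continuous_meval.
Qed.

Lemma norm_row_coord_le N (z : 'I_N -> R) j : `|z j| <= `|\row_j z j|.
Proof.
rewrite [leRHS]/Num.Def.normr /= mx_normrE.
have := le_bigmax 0 (fun ij : 'I_1 * 'I_N => `|(\row_j z j) ij.1 ij.2|) (ord0, j).
by rewrite /= mxE.
Qed.

Lemma homogeneous_coercive N (S : ('I_N -> R) -> Prop) (q : ('I_N -> R) -> R) :
  closed [set v : 'rV[R]_N | `|v| = 1 /\ S (fun j => v ord0 j)]%classic ->
  continuous (fun v : 'rV[R]_N => q (fun j => v ord0 j)) ->
  (forall z l, S z -> l != 0 -> S (fun j => l * z j)) ->
  (forall z l, q (fun j => l * z j) = l ^+ 2 * q z) ->
  (forall z, S z -> 0 < q z) ->
  exists2 c, 0 < c & forall z, S z -> c * `|\row_j z j| ^+ 2 <= q z.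
Proof.
set K := [set v | _]%classic => K_closed q_cont S_scale q_scale q_pos.
have K_compact : compact K.
  apply: bounded_closed_compact => //; exists 1; split; first by rewrite num_real.
  by move=> x x_gt1 v [/= -> _]; exact: ltW.
have row_neq0 z : S z -> \row_j z j != 0.
  move=> Sz; apply/eqP => /rowP z0; have := q_pos z Sz.
  have -> : z = (fun j => 0 * z j).
    by apply: funext => j; have := z0 j; rewrite !mxE mul0r.
  by rewrite q_scale expr0n mul0r ltxx.
have rescale z : S z -> let r := `|\row_j z j| in
    K (r^-1 *: \row_j z j) /\ z = (fun j => r * (r^-1 *: \row_j z j) ord0 j).
  move=> Sz r; have r_neq0 : r != 0 by rewrite normr_eq0 row_neq0.
  split; last by apply: funext => j; rewrite !mxE mulrA mulfV // mul1r.
  split; first by rewrite normrZ normfV normr_id mulVf.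
  have -> : (fun j => (r^-1 *: \row_j z j) ord0 j) = (fun j => r^-1 * z j).
    by apply: funext => j; rewrite !mxE.
  by apply: S_scale; rewrite ?invr_eq0.
have [K_neq0|K_eq0] := pselect (K !=set0)%classic; last first.
  exists 1 => // z Sz; case: K_eq0.
  by have [Kz _] := rescale z Sz; exact: ex_intro _ _ Kz.
have [u /set_mem [_ Su] u_min] :=
  EVT_min_rV K_neq0 K_compact (continuous_subspaceT q_cont).
exists (q (fun j => u ord0 j)); first exact: q_pos.
move=> z Sz; have [Kz zE] := rescale z Sz.
rewrite [in leRHS]zE q_scale mulrC ler_wpM2l ?sqr_ge0 //.
exact: u_min (mem_set Kz).
Qed.

End RealContinuity.

Section RealPointsOfZariskiClosure.
Variables (R : realType) (m : nat) (S : ('I_m.+1 -> R[i]) -> Prop).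
Local Notation real_point z := (fun j => (z j)%:C%C).

Lemma real_linear_meval N (f : {additive R[i] -> R})
    (fZ : forall (x : R) c, f (x%:C%C * c) = x * f c)
    (p : {mpoly R[i][N]}) (z : 'I_N -> R) :
  f p.@[real_point z] = (map_mpoly f p).@[z].
Proof.
rewrite (map_mpolyE _ (leqnn (msize p))) [in LHS](mpolywE (leqnn (msize p))).
rewrite !(big_morph _ (mevalD _) (meval0 _)) raddf_sum; apply: eq_bigr => a _.
rewrite !mevalZ !mevalX.
have -> : \prod_i (z i)%:C%C ^+ a i = (\prod_i z i ^+ a i)%:C%C.
  by rewrite rmorph_prod; apply: eq_bigr => j _; rewrite rmorphXn.
by rewrite mulrC fZ mulrC.
Qed.

Lemma meval_dhomog_scale (C : comNzRingType) M e (p : {mpoly C[M]}) c w :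
  p \is e.-homog -> p.@[fun j => c * w j] = c ^+ e * p.@[w].
Proof.
move=> hp; rewrite !mevalE mulr_sumr; apply: eq_big_seq => a ha.
rewrite mulrCA; congr (_ * _).
rewrite -(dhomog_mf hp ha) /= mdegE.
under eq_bigr do rewrite exprMn.
by rewrite big_split /= prodrXr.
Qed.

Lemma zariski_real_neq0 z :
  zariski_closure S (real_point z) -> exists j, z j != 0.
Proof. by case=> [[j]]; rewrite fmorph_eq0; exists j. Qed.

Lemma zariski_real_scale z l : zariski_closure S (real_point z) -> l != 0 ->
  zariski_closure S (real_point (fun j => l * z j)).
Proof.
move=> [[j zj] z_zero] l_neq0; split.
  by exists j; rewrite rmorphM mulf_neq0 // fmorph_eq0.
move=> e p p_homog p_zero.
have -> : (fun j => (l * z j)%:C%C) = (fun j => l%:C%C * (z j)%:C%C).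
  by apply: funext => k; rewrite rmorphM.
by rewrite (meval_dhomog_scale _ _ p_homog) (z_zero e) ?mulr0.
Qed.

Lemma closed_zariski_real_sphere :
  closed [set v : 'rV[R]_m.+1 |
    `|v| = 1 /\ zariski_closure S (real_point (fun j => v ord0 j))]%classic.
Proof.
set D := [set p : {mpoly R[i][m.+1]} |
  (exists e, p \is e.-homog) /\ forall w, S w -> p.@[w] = 0]%classic.
have ReZ (x : R) c : complex.Re (x%:C%C * c) = x * complex.Re c.
  by case: c => a b /=; rewrite !mul0r subr0.
have ImZ (x : R) c : complex.Im (x%:C%C * c) = x * complex.Im c.
  by case: c => a b /=; rewrite !mul0r addr0.
have -> : [set v : 'rV[R]_m.+1 |
    `|v| = 1 /\ zariski_closure S (real_point (fun j => v ord0 j))]%classic =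
  ([set v | `|v| = 1] `&` \bigcap_(p in D)
    ([set v : 'rV[R]_m.+1 |
        (map_mpoly (@complex.Re R) p).@[fun j => v ord0 j] = 0] `&`
     [set v : 'rV[R]_m.+1 |
        (map_mpoly (@complex.Im R) p).@[fun j => v ord0 j] = 0]))%classic.
  apply/seteqP; split => v /=.
    move=> [v1 [_ v_zero]]; split => // p [[e p_homog] p_zero].
    by split; rewrite /= -?(real_linear_meval ReZ) -?(real_linear_meval ImZ)
      (v_zero e) ?raddf0.
  move=> [v1 v_zero]; split => //; split.
    have v_neq0 : v != 0 by rewrite -normr_eq0 v1 oner_neq0.
    have : ~ (forall j, v ord0 j = 0).
      by move=> v0; move/eqP: v_neq0; apply; apply/rowP => j; rewrite v0 mxE.
    by move=> /existsNP [j /eqP vj]; exists j; rewrite fmorph_eq0.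
  move=> e p p_homog p_zero.
  have [/= Re0 Im0] := v_zero p (conj (ex_intro _ e p_homog) p_zero).
  rewrite -(real_linear_meval ReZ) in Re0.
  rewrite -(real_linear_meval ImZ) in Im0.
  by move: Re0 Im0; case: (p.@[_]) => a b /= -> ->.
have closed_level (F : 'rV[R]_m.+1 -> R) c :
    continuous F -> closed [set v | F v = c]%classic.
  move=> F_cont; apply: (@preimage_closed _ _ F [set c]%classic).
    by move=> x _; exact: F_cont.
  exact: closed_eq.
apply: closedI; first exact/closed_level/norm_continuous.
by apply: closed_bigI => p _; apply: closedI; apply/closed_level/continuous_meval.
Qed.

End RealPointsOfZariskiClosure.

Lemma qAD (R : comNzRingType) M (A B : 'M[R]_M) z :
  qA (A + B) z = qA A z + qA B z.
Proof.
rewrite /qA -big_split; apply: eq_bigr => a _; rewrite -big_split.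
by apply: eq_bigr => b _; rewrite mxE mulrDr mulrDl.
Qed.

Lemma qA_scalev (R : comNzRingType) M (A : 'M[R]_M) z l :
  qA A (fun j => l * z j) = l ^+ 2 * qA A z.
Proof.
rewrite /qA mulr_sumr; apply: eq_bigr => a _; rewrite mulr_sumr.
by apply: eq_bigr => b _; rewrite expr2; ring.
Qed.

Lemma qA_scalar_mx (R : comNzRingType) M (c : R) z :
  qA (c%:M : 'M[R]_M) z = c * \sum_j z j ^+ 2.
Proof.
rewrite /qA mulr_sumr; apply: eq_bigr => a _.
rewrite (bigD1 a) //= big1 ?addr0 => [|b ba].
  by rewrite mxE eqxx mulr1n expr2; ring.
by rewrite mxE eq_sym (negbTE ba) mulr0n mulr0 mul0r.
Qed.

Lemma norm_qA_le (R : numDomainType) M (B : 'M[R]_M) z e K :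
  (forall a b, `|B a b| <= e) -> (forall j, `|z j| <= K) ->
  `|qA B z| <= (M * M)%:R * (e * K ^+ 2).
Proof.
move=> B_le z_le.
have -> : (M * M)%:R * (e * K ^+ 2) = \sum_(a < M) \sum_(b < M) (e * K ^+ 2).
  by rewrite !sumr_const !card_ord -mulrnA mulr_natl.
apply: le_trans (ler_norm_sum _ _ _) _; apply: ler_sum => a _.
apply: le_trans (ler_norm_sum _ _ _) _; apply: ler_sum => b _.
rewrite !normrM expr2 mulrA [e * K]mulrC.
by apply: ler_pM; rewrite ?mulr_ge0 //; apply: ler_pM.
Qed.

Section Monomials.
Variables n d : nat.

Lemma mem_mons m : (m \in mons n d) = (mdeg m == d).
Proof.
rewrite /mons mem_sort mem_filter andbC.
case: eqP => [m_deg|]; last by rewrite andbF.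
rewrite andbT; apply/mapP; have m_lt : (mdeg m < d.+1)%N by rewrite m_deg.
by exists (BMultinom m_lt); rewrite ?mem_enum.
Qed.

Lemma size_mons : size (mons n d) = (kk n d).+1.
Proof.
have mons_uniq : uniq (mons n d).
  rewrite /mons sort_uniq filter_uniq // map_inj_uniq ?enum_uniq //.
  exact: val_inj.
have /perm_size -> : perm_eq (mons n d)
    [seq s2m t | t : d.-tuple 'I_n.+1 <- enum (mpoly.basis n.+1 d)].
  apply: uniq_perm; [exact: mons_uniq | exact: uniq_basis |].
  by move=> m; rewrite mem_mons basis_cover.
rewrite size_basis /kk prednK; last by rewrite bin_gt0 leq_addr.
by rewrite -[in LHS]bin_sub ?leq_addr // addKn addnC.
Qed.

Lemma mdeg_alpha (j : 'I_(kk n d).+1) : mdeg (alpha j) = d.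
Proof. by apply/eqP; rewrite -mem_mons mem_nth // size_mons. Qed.

Lemma alpha_onto m : mdeg m = d -> exists j : 'I_(kk n d).+1, alpha j = m.
Proof.
move=> m_deg; have m_mons : m \in mons n d by rewrite mem_mons m_deg.
have j_lt : (index m (mons n d) < (kk n d).+1)%N by rewrite -size_mons index_mem.
by exists (Ordinal j_lt); rewrite /alpha nth_index.
Qed.

End Monomials.

Lemma s2m_cat k (s1 s2 : seq 'I_k) : s2m (s1 ++ s2) = (s2m s1 + s2m s2)%MM.
Proof. by apply/mnmP => j; rewrite mnmDE !mnmE count_cat. Qed.

Lemma mdeg_s2m k (s : seq 'I_k) : mdeg (s2m s) = size s.
Proof.
elim: s => [|a s IH]; first by rewrite mdegE big1 // => j _; rewrite mnmE.
rewrite -cat1s s2m_cat mdegD IH mdegE (bigD1 a) //= big1 => [|j ja].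
  by rewrite mnmE /= eqxx.
by rewrite mnmE /= eq_sym (negbTE ja).
Qed.

Lemma mdeg_split k (m : 'X_{1..k}) e1 e2 : mdeg m = (e1 + e2)%N ->
  exists m1 m2 : 'X_{1..k}, [/\ mdeg m1 = e1, mdeg m2 = e2 & m = (m1 + m2)%MM].
Proof.
move=> m_deg; have t_size : size (m2s m) = (e1 + e2)%N by rewrite size_m2s.
exists (s2m (take e1 (m2s m))), (s2m (drop e1 (m2s m))); split.
- by rewrite mdeg_s2m size_takel // t_size leq_addr.
- by rewrite mdeg_s2m size_drop t_size addKn.
- by rewrite -s2m_cat cat_take_drop s2mK.
Qed.

Section GramMatrices.
Variables (R : realType) (n d : nat).
Local Notation N := (kk n d).+1.

Lemma Gmap_coef (A : 'M[R]_N) m :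
  (Gmap A)@_m = \sum_a \sum_b A a b * ((alpha a + alpha b)%MM == m)%:R.
Proof.
rewrite /Gmap raddf_sum; apply: eq_bigr => a _; rewrite raddf_sum.
by apply: eq_bigr => b _; rewrite /= mcoeffZ /mono -mpolyXD mcoeffX.
Qed.

Lemma Gmap_homog (A : 'M[R]_N) : Gmap A \is (2 * d).-homog.
Proof.
apply: rpred_sum => a _; apply: rpred_sum => b _; apply: dhomogZ.
by rewrite /mono -mpolyXD dhomogX /= mdegD !mdeg_alpha mul2n addnn.
Qed.

Lemma GmapD (A B : 'M[R]_N) : Gmap (A + B) = Gmap A + Gmap B.
Proof.
rewrite /Gmap -big_split; apply: eq_bigr => a _; rewrite -big_split.
by apply: eq_bigr => b _; rewrite mxE scalerDl.
Qed.

Lemma norm_Gmap_coef_le (A : 'M[R]_N) e m :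
  (forall a b, `|A a b| <= e) -> `|(Gmap A)@_m| <= (N * N)%:R * e.
Proof.
move=> A_le; have -> : (N * N)%:R * e = \sum_(a < N) \sum_(b < N) e.
  by rewrite !sumr_const !card_ord -mulrnA mulr_natl.
rewrite Gmap_coef; apply: le_trans (ler_norm_sum _ _ _) _; apply: ler_sum => a _.
apply: le_trans (ler_norm_sum _ _ _) _; apply: ler_sum => b _.
rewrite normrM; case: eqP => _; rewrite ?normr1 ?mulr1 ?normr0 ?mulr0 ?A_le //.
exact: le_trans (normr_ge0 _) (A_le a b).
Qed.

Definition pair_count m : R :=
  \sum_(a < N) \sum_(b < N) ((alpha a + alpha b)%MM == m)%:R.

Lemma pair_count_ge1 (a b : 'I_N) : 1 <= pair_count (alpha a + alpha b)%MM.
Proof.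
rewrite /pair_count (bigD1 a) //= (bigD1 b) //= eqxx -addrA lerDl.
by rewrite addr_ge0 // sumr_ge0 // => *; rewrite ?sumr_ge0 // => *; exact: ler0n.
Qed.

(* Spreading each coefficient h_m evenly over the pair_count m entries (a, b)
   with alpha_a + alpha_b = m gives a symmetric preimage of h under G. *)
Definition gram_of (h : {mpoly R[n.+1]}) : 'M[R]_N :=
  \matrix_(a, b) (h@_(alpha a + alpha b)%MM / pair_count (alpha a + alpha b)%MM).

Lemma gram_of_sym h : is_symmx (gram_of h).
Proof. by apply/matrixP => a b; rewrite !mxE addmC. Qed.

Lemma norm_gram_of_le h a b : `|gram_of h a b| <= `|h@_(alpha a + alpha b)%MM|.
Proof.
have count_ge1 := pair_count_ge1 a b.
have count_gt0 := lt_le_trans ltr01 count_ge1.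
by rewrite mxE normrM normfV (gtr0_norm count_gt0) ler_pdivrMr // ler_peMr.
Qed.

Lemma Gmap_gram_of h : h \is (2 * d).-homog -> Gmap (gram_of h) = h.
Proof.
move=> h_homog; apply/mpolyP => m; rewrite Gmap_coef.
transitivity (h@_m / pair_count m * pair_count m).
  rewrite /pair_count mulr_sumr; apply: eq_bigr => a _; rewrite mulr_sumr.
  apply: eq_bigr => b _; rewrite mxE.
  by case: eqP => [->|_]; rewrite ?mulr1 ?mulr0.
have [count0|/divfK //] := eqVneq (pair_count m) 0.
rewrite count0 mulr0; apply/esym/eqP; apply: contraT => hm_neq0.
have /(dhomog_mf h_homog) /= m_deg : m \in msupp h by rewrite mcoeff_msupp.
rewrite mul2n -addnn in m_deg.
have [m1 [m2 [/alpha_onto [a <-] /alpha_onto [b <-] m_split]]] :=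
  mdeg_split m_deg.
by have := pair_count_ge1 a b; rewrite -m_split count0 ler10.
Qed.

End GramMatrices.

Section InteriorOfCi.
Variables (R : realType) (n d i : nat).
Local Notation N := (kk n d).+1.

Lemma VRset_coercive (A : 'M[R]_N) :
  (forall z, @VRset R n d i z -> 0 < qA A z) ->
  exists2 c, 0 < c &
    forall z, @VRset R n d i z -> c * `|\row_j z j| ^+ 2 <= qA A z.
Proof.
move=> A_pos; apply: homogeneous_coercive A_pos.
- exact: closed_zariski_real_sphere.
- exact: continuous_qA.
- by move=> z l; exact: zariski_real_scale.
- by move=> z l; exact: qA_scalev.
Qed.

Lemma interior_Cset_pos_gram f : form_interior (2 * d) (@Cset R n d i) f ->
  exists A : 'M[R]_N,
    [/\ is_symmx A, Gmap A = f & forall z, @VRset R n d i z -> 0 < qA A z].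
Proof.
move=> [f_form [eps [eps_gt0 near_f_in_C]]].
set del := eps / ((N * N)%:R + 1).
have del_gt0 : 0 < del by rewrite divr_gt0 // ltr_wpDl.
set g := f - Gmap (del%:M : 'M[R]_N).
have g_form : is_form (2 * d) g by apply: rpredB => //; exact: Gmap_homog.
have g_near_f m : `|g@_m - f@_m| < eps.
  rewrite mcoeffB addrAC subrr add0r normrN.
  apply: le_lt_trans (norm_Gmap_coef_le (e := del) _ _) _ => [a b|].
    rewrite mxE; case: eqP => _; first by rewrite mulr1n gtr0_norm.
    by rewrite mulr0n normr0 ltW.
  by rewrite /del mulrCA gtr_pMr // ltr_pdivrMr ?ltr_wpDl // mul1r ltrDl.
have [_ [A [A_sym [GA A_nneg]]]] := near_f_in_C _ g_form g_near_f.
exists (A + del%:M); split.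
- by rewrite /is_symmx linearD /= tr_scalar_mx A_sym.
- by rewrite GmapD GA subrK.
move=> z z_VR; have [j zj] := zariski_real_neq0 z_VR.
rewrite qAD qA_scalar_mx ltr_wpDl ?A_nneg // mulr_gt0 // (bigD1 j) //=.
by rewrite ltr_wpDr ?sumr_ge0 // => *; rewrite ?sqr_ge0 ?exprn_even_gt0.
Qed.

Lemma pos_gram_interior_Cset f A : is_form (2 * d) f ->
  is_symmx A -> Gmap A = f -> (forall z, @VRset R n d i z -> 0 < qA A z) ->
  form_interior (2 * d) (@Cset R n d i) f.
Proof.
move=> f_form A_sym GA A_pos; have [c c_gt0 A_coercive] := VRset_coercive A_pos.
have NN_gt0 : 0 < (N * N)%:R :> R by rewrite ltr0n muln_gt0.
split => //; exists (c / (N * N)%:R); split => [|g g_form g_near_f].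
  by rewrite divr_gt0.
have h_form : (g - f) \is (2 * d).-homog by rewrite rpredB.
split => //; exists (A + gram_of d (g - f)); split; [|split].
- by rewrite /is_symmx linearD /= A_sym gram_of_sym.
- by rewrite GmapD GA Gmap_gram_of // addrC subrK.
move=> z z_VR; set K := `|\row_j z j|.
have qB_le : `|qA (gram_of d (g - f)) z| <= c * K ^+ 2.
  apply: le_trans (norm_qA_le (e := c / (N * N)%:R) (K := K) _ _) _.
  - move=> a b; apply: le_trans (norm_gram_of_le _ _ _) _.
    by rewrite mcoeffB; exact/ltW/g_near_f.
  - exact: norm_row_coord_le.
  by rewrite mulrA [_ * (c / _)]mulrC divfK ?gt_eqF.
rewrite qAD -(subrr (c * K ^+ 2)) lerD ?A_coercive //.
by rewrite lerNl; apply: le_trans qB_le; rewrite -normrN ler_norm.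
Qed.

End InteriorOfCi.

Theorem theorem2p3 (R : realType) (n d : nat) (hn : (0 < n)%N) (hd : (0 < d)%N)
  (i : nat) (hi : (i <= kk n d - n)%N) (f : {mpoly R[n.+1]}) :
  form_interior (2 * d) (@Cset R n d i) f <->
  (is_form (2 * d) f /\
   exists A : 'M[R]_((kk n d).+1),
     is_symmx A /\ Gmap A = f /\ forall z, @VRset R n d i z -> 0 < qA A z).
Proof.
split=> [f_int | [f_form [A [A_sym [GA A_pos]]]]].
  have [A [A_sym GA A_pos]] := interior_Cset_pos_gram f_int.
  by split; [exact: f_int.1 | exists A].
exact: pos_gram_interior_Cset f_form A_sym GA A_pos.
Qed.
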